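(* Assume that $\{A_0,A_1\}$ is a partition of $\mathbb R$ which is a $2$-S-covering. Then at least one of the sets $A_0,A_1$ is a $2$-covering.
   Context: A family $\mathcal A$ of pairwise disjoint subsets of $\mathbb R$ is a $\kappa$-S-covering if $|\mathcal A|=\kappa$ and for every $F\subseteq\mathbb R$ with $|F|=\kappa$ there is $t\in\mathbb R$ such that $F+t\subseteq\bigcup\mathcal A$ and $|(F+t)\cap A|=1$ for every $A\in\mathcal A$. A set $A\subseteq\mathbb R$ is a $2$-covering if for every $B\subseteq\mathbb R$ with $|B|=2$ there is $x\in\mathbb R$ with $B+x\subseteq A$. *)

From Stdlib Require Import Reals.
Open Scope R_scope.

(* A two-element subset of R is written {a, b} with a <> b. *)

Definition exactly_one_in (A : R -> Prop) (a b : R) : Prop :=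
  (A a /\ ~ A b) \/ (~ A a /\ A b).

Definition partition2 (A0 A1 : R -> Prop) : Prop :=
  (forall x, ~ (A0 x /\ A1 x)) /\ (forall x, A0 x \/ A1 x) /\
  (exists x, A0 x) /\ (exists x, A1 x).

Definition two_S_covering (A0 A1 : R -> Prop) : Prop :=
  forall a b : R, a <> b ->
    exists t : R,
      ((A0 (a + t) \/ A1 (a + t)) /\ (A0 (b + t) \/ A1 (b + t))) /\
      exactly_one_in A0 (a + t) (b + t) /\
      exactly_one_in A1 (a + t) (b + t).

Definition two_covering (A : R -> Prop) : Prop :=
  forall a b : R, a <> b -> exists x : R, A (a + x) /\ A (b + x).

(* If neither piece is a 2-covering, some pair {a, b} has no translate inside A0,
   so every point of A0 is sent into A1 by both translations by d0 = b - a and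
   by -d0; likewise A1 is sent into A0 by translations by some ±d1.  Composing,
   both A0 and A1 are invariant under translation by s = d0 + d1 or s = d0 - d1,
   one of which is nonzero.  But then no translate of {0, s} meets A0 in exactly
   one point, contradicting the 2-S-covering property. *)

From Stdlib Require Import Reals Lra Classical.
Open Scope R_scope.

Definition swaps (A B : R -> Prop) (d : R) : Prop :=
  forall y, A y -> B (y + d) /\ B (y - d).

Definition shift_closed (A : R -> Prop) (s : R) : Prop :=
  forall y, A y -> A (y + s).

Lemma swaps_opp (A B : R -> Prop) (d : R) : swaps A B d -> swaps A B (- d).
Proof.
  intros Hd y Hy; destruct (Hd y Hy) as [Hplus Hminus].
  replace (y + - d) with (y - d) by ring; replace (y - - d) with (y + d) by ring.
  split; assumption.
Qed.

Lemma swaps_comp_shift_closed (A B : R -> Prop) (d e : R) :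
  swaps A B d -> swaps B A e -> shift_closed A (d + e).
Proof.
  intros Hd He y Hy.
  replace (y + (d + e)) with (y + d + e) by ring.
  apply He, Hd, Hy.
Qed.

Lemma not_two_covering_swaps (A B : R -> Prop) :
  (forall x, A x \/ B x) -> ~ two_covering A ->
  exists d, d <> 0 /\ swaps A B d.
Proof.
  intros Hcover Hnot.
  destruct (not_all_ex_not _ _ Hnot) as [a Ha].
  destruct (not_all_ex_not _ _ Ha) as [b Hab].
  apply imply_to_and in Hab; destruct Hab as [Hneq Hno_translate].
  exists (b - a); split; [intro; apply Hneq; lra |].
  intros y Hy; split.
  - destruct (Hcover (y + (b - a))) as [HA | HB]; [exfalso | exact HB].
    apply Hno_translate; exists (y - a).
    replace (a + (y - a)) with y by ring.
    replace (b + (y - a)) with (y + (b - a)) by ring.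
    split; assumption.
  - destruct (Hcover (y - (b - a))) as [HA | HB]; [exfalso | exact HB].
    apply Hno_translate; exists (y - b).
    replace (a + (y - b)) with (y - (b - a)) by ring.
    replace (b + (y - b)) with y by ring.
    split; assumption.
Qed.

Lemma two_S_covering_no_common_period (A0 A1 : R -> Prop) (s : R) :
  partition2 A0 A1 -> two_S_covering A0 A1 -> s <> 0 ->
  shift_closed A0 s -> shift_closed A1 s -> False.
Proof.
  intros [Hdisj [Hcover _]] HS Hs H0 H1.
  destruct (HS 0 s) as [t [_ [Hone _]]]; [intro; apply Hs; lra |].
  rewrite Rplus_0_l, (Rplus_comm s t) in Hone.
  destruct Hone as [[Ht Hts] | [Ht Hts]].
  - apply Hts, H0, Ht.
  - destruct (Hcover t) as [HA0 | HA1]; [contradiction |].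
    apply (Hdisj (t + s)); split; [exact Hts | apply H1, HA1].
Qed.

Theorem mainTheorem9 (A0 A1 : R -> Prop) :
  partition2 A0 A1 -> two_S_covering A0 A1 ->
  two_covering A0 \/ two_covering A1.
Proof.
  intros HP HS.
  destruct (classic (two_covering A0)) as [? | N0]; [left; assumption |].
  destruct (classic (two_covering A1)) as [? | N1]; [right; assumption |].
  exfalso; destruct HP as (Hdisj & Hcover & Hne).
  destruct (not_two_covering_swaps A0 A1 Hcover N0) as (d0 & Hd0 & S0).
  assert (Hcover' : forall x, A1 x \/ A0 x) by (intro x; destruct (Hcover x); tauto).
  destruct (not_two_covering_swaps A1 A0 Hcover' N1) as (d1 & _ & S1).
  assert (Hperiod : forall e, d0 + e <> 0 -> swaps A1 A0 e -> False).
  { intros e He S1e.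
    apply (two_S_covering_no_common_period A0 A1 (d0 + e)); try assumption.
    - split; [exact Hdisj | split; assumption].
    - exact (swaps_comp_shift_closed A0 A1 d0 e S0 S1e).
    - rewrite Rplus_comm; exact (swaps_comp_shift_closed A1 A0 e d0 S1e S0). }
  destruct (Req_dec (d0 + d1) 0) as [Hzero | Hnonzero].
  - apply (Hperiod (- d1)); [lra | exact (swaps_opp A1 A0 d1 S1)].
  - exact (Hperiod d1 Hnonzero S1).
Qed.
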